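(* Let $C\subset\mathbb{Z}_2^{l+r}$ be an even code (a subgroup with $|\alpha|\in2\mathbb{Z}$ for all $\alpha\in C$), and let $\varepsilon:C\times C\to\{\pm1\}$ be bimultiplicative with $\varepsilon(\alpha,\alpha)=(-1)^{|\alpha|/2}$ and $\varepsilon(\alpha,\beta)\varepsilon(\beta,\alpha)=(-1)^{|\alpha\beta|}$. Then the twisted group algebra $\mathbb{C}[\hat C]$ (basis $e_\alpha$, $e_\alpha e_\beta=\varepsilon(\alpha,\beta)e_{\alpha+\beta}$, $e_\alpha$ in degree $(0,\alpha)$, unit $e_0$) is a simple $(l,r)$-framed algebra whose structure codes are $D=\{0\}$ and $C$.
   Context: Let $\mathrm{IS}=\{0,\frac12,\frac1{16}\}$ with fusion rule $\star$ (values are subsets): $0\star h=h\star0=\{h\}$, $\frac12\star\frac12=\{0\}$, $\frac12\star\frac1{16}=\frac1{16}\star\frac12=\{\frac1{16}\}$, $\frac1{16}\star\frac1{16}=\{0,\frac12\}$; $A(h_0,h_1,h_2,h_3)=\{h: h\in h_2\star h_3,\ h_0\in h_1\star h\}$. For $h\in A(h_0,h_1,h_2,h_3)$, $h'\in A(h_0,h_2,h_1,h_3)$ define $B^{h,h'}_{h_0,h_1,h_2,h_3}$: $B_{*,0,*,*}=B_{*,*,0,*}=1$; $B_{*,\frac12,\frac12,*}=-1$; $B_{a,\frac12,\frac1{16},a'}=B_{a,\frac1{16},\frac12,a'}=i$ if $a$ or $a'$ is $\frac12$, else $-i$; $B^{b,b'}_{a,\frac1{16},\frac1{16},a'}=e^{-\pi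 i/8}\cdot\{1$ if $a,a'\ne\frac1{16},a=a'$; $i$ if $a,a'\neq\frac1{16},a\ne a'$; $\frac{1+i}2$ if $a=a'=\frac1{16},b=b'$; $\frac{1-i}2$ if $a=a'=\frac1{16},b\neq b'\}$. $\mathrm{IS}^{(l,r)}=\mathrm{IS}^l\times\mathrm{IS}^r$, $\lambda=(h_1,..,h_l,\bar h_1,..,\bar h_r)$, $s(\lambda)=\sum h_i-\sum\bar h_j$; $\star$, $A$ componentwise; $B^{\lambda,\lambda'}_{\lambda^0,\dots,\lambda^3}=\prod_{i\le l}B^{h_i,h'_i}_{h^0_i,\dots,h^3_i}\prod_{j\le r}\overline{B^{\bar h_j,\bar h'_j}_{\bar h^0_j,\dots,\bar h^3_j}}$. An $(l,r)$-framed algebra: finite-dimensional $\mathrm{IS}^{(l,r)}$-graded $S=\bigoplus S_\lambda$ over $\mathbb{C}$ with bilinear product, nonzero $1\in S_0$, $a\cdot_\lambda b$ the $S_\lambda$-component of $a\cdot b$, satisfying (FA1) $S_\lambda=0$ unless $s(\lambda)\in\mathbb{Z}$; (FA2) $S_0=\mathbb{C}1$, $1$ a two-sided unit; (FA3) $S_{\lambda^1}\cdot S_{\lambda^2}\subset\bigoplus_{\lambda\in\lambda^1\star\lambda^2}S_\lambda$; (FA4) $a_2\cdot_{\lambda^0}(a_1\cdot_{\lambda'}a_3)=\sum_{\lambda\in A(\lambda^0,\lambda^1,\lambda^2,\lambda^3)}B^{\lambda,\lambda'}_{\lambda^0,\lambda^1,\lambda^2,\lambda^3}a_1\cdot_{\lambda^0}(a_2\cdot_\lambda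 a_3)$ for $a_i\in S_{\lambda^i}$, $\lambda'\in A(\lambda^0,\lambda^2,\lambda^1,\lambda^3)$. Ideal: graded subspace $M$ with $S\cdot M\subset M$; simple: only ideals $0$ and $S$. Identify $\mathrm{IS}$ with $\{(d,c)\in\mathbb{Z}_2^2:dc=0\}$ via $0\leftrightarrow(0,0)$, $\frac12\leftrightarrow(0,1)$, $\frac1{16}\leftrightarrow(1,0)$, and componentwise $\mathrm{IS}^{(l,r)}$ with pairs $(d,c)\in(\mathbb{Z}_2^{l+r})^2$, $dc=0$. For $c\in\mathbb{Z}_2^{l+r}$, $|c|=|c|_l-|c|_r$ with $|c|_l,|c|_r$ the numbers of ones in the first $l$ and last $r$ coordinates; products of codewords are componentwise. Structure codes of $S$: $C_S=\{\alpha:S_{(0,\alpha)}\ne0\}$, $D_S=\{d:\bigoplus_cS_{(d,c)}\ne0\}$. *)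

From HB Require Import structures.
From mathcomp Require Import all_boot all_order all_algebra all_field.
From mathcomp Require Import complex Rstruct.
From Stdlib Require Rtrigo_def Rtrigo1.

Set Implicit Arguments.
Unset Strict Implicit.
Unset Printing Implicit Defensive.

Import Order.TTheory GRing.Theory Num.Theory.
Local Open Scope ring_scope.

Definition Cx : numClosedFieldType := Rdefinitions.R[i].

(* e^{-pi i/8} = cos(pi/8) - i sin(pi/8) *)
Definition zeta : Cx :=
  Complex (Rtrigo_def.cos (Rtrigo1.PI / 8%:R)) (- Rtrigo_def.sin (Rtrigo1.PI / 8%:R)).

(* The Ising fusion data IS = {0, 1/2, 1/16}.                           *)
Inductive IS := I0 | Ihalf | Isig.

Definition IS_to (h : IS) : 'I_3 :=
  match h with I0 => inord 0 | Ihalf => inord 1 | Isig => inord 2 end.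
Definition IS_of (i : 'I_3) : IS :=
  match val i with 0 => I0 | 1 => Ihalf | _ => Isig end.
Lemma IS_K : cancel IS_to IS_of.
Proof. by case; rewrite /IS_of /= inordK. Qed.
HB.instance Definition _ := Finite.copy IS (can_type IS_K).

Definition wIS (h : IS) : rat :=
  match h with I0 => 0 | Ihalf => 1 / 2%:R | Isig => 1 / 16%:R end.

Definition fusIS (a b h : IS) : bool :=
  match a, b with
  | I0, _ => h == b
  | _, I0 => h == a
  | Ihalf, Ihalf => h == I0
  | Ihalf, Isig | Isig, Ihalf => h == Isig
  | Isig, Isig => (h == I0) || (h == Ihalf)
  end.

Definition AIS (h0 h1 h2 h3 h : IS) : bool := fusIS h2 h3 h && fusIS h1 h h0.

(* B^{h,h'}_{h0,h1,h2,h3}  (value 0 on index combinations that never occur) *)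
Definition BIS (h h' h0 h1 h2 h3 : IS) : Cx :=
  if h1 == I0 then 1 else if h2 == I0 then 1 else
  match h1, h2 with
  | Ihalf, Ihalf => -1
  | Ihalf, Isig | Isig, Ihalf =>
      if (h0 == Ihalf) || (h3 == Ihalf) then 'i else - 'i
  | Isig, Isig =>
      zeta *
      (if (h0 != Isig) && (h3 != Isig) then
         (if h0 == h3 then 1 else 'i)
       else if (h0 == Isig) && (h3 == Isig) then
         (if h == h' then (1 + 'i) / 2%:R else (1 - 'i) / 2%:R)
       else 0)
  | _, _ => 1
  end.

(* Labels IS^(l,r): coordinates i < l are the "left" ones.             *)
Definition Lam (l r : nat) := {ffun 'I_(l + r) -> IS}.

Definition lam0 (l r : nat) : Lam l r := [ffun _ => I0].

Definition sLam (l r : nat) (la : Lam l r) : rat :=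
  \sum_(i : 'I_(l + r) | (i < l)%N) wIS (la i) - \sum_(i : 'I_(l + r) | ~~ (i < l)%N) wIS (la i).

Definition fusLam l r (la1 la2 la : Lam l r) : bool :=
  [forall i, fusIS (la1 i) (la2 i) (la i)].

Definition ALam l r (la0 la1 la2 la3 la : Lam l r) : bool :=
  [forall i, AIS (la0 i) (la1 i) (la2 i) (la3 i) (la i)].

Definition BLam l r (la la' la0 la1 la2 la3 : Lam l r) : Cx :=
  (\prod_(i : 'I_(l + r) | (i < l)%N) BIS (la i) (la' i) (la0 i) (la1 i) (la2 i) (la3 i)) *
  (\prod_(i : 'I_(l + r) | ~~ (i < l)%N)
      (BIS (la i) (la' i) (la0 i) (la1 i) (la2 i) (la3 i))^*).

(* S is a finite-dimensional C-vector space V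
   (a vectType), graded by a complete family of orthogonal projections
   pi la, with S_la = limg (pi la); a .{la} b = pi la (mul a b).       *)
Definition Scomp l r (V : vectType Cx) (pi : Lam l r -> 'End(V)) la : {vspace V} :=
  limg (pi la).

Definition is_framed_algebra l r (V : vectType Cx) (mul : V -> V -> V) (one : V)
    (pi : Lam l r -> 'End(V)) : Prop :=
  ((forall (k : Cx) a b c, mul (k *: a + b) c = k *: mul a c + mul b c) /\
      (forall (k : Cx) a b c, mul a (k *: b + c) = k *: mul a b + mul a c) /\
      (forall la v, pi la (pi la v) = pi la v) /\
      (forall la mu v, la != mu -> pi la (pi mu v) = 0) /\
      (forall v, \sum_(la : Lam l r) pi la v = v) /\
  (* FA1 *)
      (forall la, ~~ (sLam la \is a Num.int) -> Scomp pi la = 0%VS) /\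
  (* FA2 : nonzero 1 \in S_0, S_0 = C 1, 1 two-sided unit *)
      [/\ one != 0, Scomp pi (lam0 l r) = <[one]>%VS,
          (forall a, mul one a = a) & (forall a, mul a one = a)] /\
  (* FA3 *)
      (forall la1 la2 a b, a \in Scomp pi la1 -> b \in Scomp pi la2 ->
         mul a b \in (\sum_(la | fusLam la1 la2 la) Scomp pi la)%VS) /\
  (* FA4 *)
      (forall la0 la1 la2 la3 la' a1 a2 a3,
         a1 \in Scomp pi la1 -> a2 \in Scomp pi la2 -> a3 \in Scomp pi la3 ->
         ALam la0 la2 la1 la3 la' ->
         pi la0 (mul a2 (pi la' (mul a1 a3))) =
         \sum_(la | ALam la0 la1 la2 la3 la)
            BLam la la' la0 la1 la2 la3 *: pi la0 (mul a1 (pi la (mul a2 a3))))).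

Definition is_ideal l r (V : vectType Cx) (mul : V -> V -> V) (pi : Lam l r -> 'End(V))
    (M : {vspace V}) : Prop :=
  (forall la, (pi la @: M <= M)%VS) /\ (forall a m, m \in M -> mul a m \in M).

Definition is_simple l r (V : vectType Cx) (mul : V -> V -> V) (pi : Lam l r -> 'End(V)) : Prop :=
  forall M : {vspace V}, is_ideal mul pi M -> M = 0%VS \/ M = fullv.

Definition cw (l r : nat) := 'rV['F_2]_(l + r).

Definition cwmul l r (a b : cw l r) : cw l r := \row_i (a 0 i * b 0 i).

Definition cwt l r (c : cw l r) : int :=
  (#|[set i : 'I_(l + r) | (i < l)%N && (c 0 i != 0)]|)%:Z
  - (#|[set i : 'I_(l + r) | ~~ (i < l)%N && (c 0 i != 0)]|)%:Z.

(* identification (d,c) <-> label: 1/16 where d_i = 1, 1/2 where c_i = 1 *)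
Definition enc l r (d c : cw l r) : Lam l r :=
  [ffun i => if d 0 i != 0 then Isig else if c 0 i != 0 then Ihalf else I0].

Definition codeC l r (V : vectType Cx) (pi : Lam l r -> 'End(V)) : {set cw l r} :=
  [set al : cw l r | Scomp pi (enc 0 al) != 0%VS].

Definition codeD l r (V : vectType Cx) (pi : Lam l r -> 'End(V)) : {set cw l r} :=
  [set d : cw l r | [exists c : cw l r,
      (cwmul d c == 0) && (Scomp pi (enc d c) != 0%VS)]].

(* The twisted group algebra C[C^] : functions C -> Cx, e_al = delta_al. *)
Definition Csub l r (C : {set cw l r}) := {x : cw l r | x \in C}.

Definition TGA l r (C : {set cw l r}) : vectType Cx := {ffun Csub C -> Cx^o}.

Definition tga_mul l r (C : {set cw l r}) (eps : cw l r -> cw l r -> Cx)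
    (f g : TGA C) : TGA C :=
  [ffun ga : Csub C => \sum_(a : Csub C) \sum_(b : Csub C | val a + val b == val ga)
      eps (val a) (val b) * f a * g b].

Definition tga_one l r (C : {set cw l r}) : TGA C :=
  [ffun a : Csub C => if val a == 0 then 1 else 0].

Definition tga_pi l r (C : {set cw l r}) (la : Lam l r) : 'End(TGA C) :=
  linfun (fun f : TGA C =>
    [ffun a : Csub C => if enc 0 (val a) == la then f a else 0] : TGA C).

(* The basis vector e_a of C[C^] spans the graded component of label (0, a): the
   label with entries 1/2 exactly on the support of a.  On such labels the Ising
   fusion rules reduce to addition in Z_2^(l+r) and the braiding matrix B reduces to
   the sign (-1)^|ab|.  Hence FA3 is the closure of C under addition, FA1 is the
   evenness of C, and FA4 on basis vectors e_a, e_b, e_c reduces, by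
   bimultiplicativity, to eps(b, a) = (-1)^|ab| eps(a, b).  A nonzero graded ideal
   contains some e_a, hence e_a e_a = eps(a, a) e_0, hence the unit.  The structure
   codes are read off from the labels of the basis vectors. *)

From HB Require Import structures.
From mathcomp Require Import all_boot all_order all_algebra all_field.
From mathcomp Require Import complex Rstruct.
From mathcomp Require Import ring.
Import Order.TTheory GRing.Theory Num.Theory.
Local Open Scope ring_scope.
Set Implicit Arguments.
Unset Strict Implicit.
Unset Printing Implicit Defensive.

Lemma sumr_const_if (R : nmodType) (I : finType) (P Q : pred I) (c : R) :
  \sum_(i | P i) (if Q i then c else 0) = c *+ #|[set i | P i && Q i]|.
Proof. by rewrite -big_mkcondr -sumr_const; apply: eq_bigl => i; rewrite inE. Qed.

Lemma prodr_const_if (R : comPzRingType) (I : finType) (P Q : pred I) (c : R) :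
  \prod_(i | P i) (if Q i then c else 1) = c ^+ #|[set i | P i && Q i]|.
Proof. by rewrite -big_mkcondr -prodr_const; apply: eq_bigl => i; rewrite inE. Qed.

Lemma sign_subz (R : fieldType) (m n : nat) :
  (-1 : R) ^ (m%:Z - n%:Z) = (-1) ^+ m * (-1) ^+ n.
Proof. by rewrite expfzDr ?oppr_eq0 ?oner_eq0 // -exprnN invr_sign. Qed.

Lemma conjC_if_sign (b : bool) : ((if b then -1 else 1 : Cx))^* = if b then -1 else 1.
Proof. by case: b; rewrite ?conjCN1 ?conjC1. Qed.

Lemma F2_inj_neq0 (u v : 'F_2) : (u != 0) = (v != 0) -> u = v.
Proof. by move: u v; do 2!case=> [[|[|]] ?] //=; move=> _; apply/val_inj. Qed.

Lemma F2_addr_neq0 (u v : 'F_2) : (u + v != 0) = (u != 0) (+) (v != 0).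
Proof. by move: u v; do 2!case=> [[|[|]] ?] //=. Qed.

Definition ISbit (b : bool) : IS := if b then Ihalf else I0.

Lemma Ihalf_neq0 : (Ihalf == I0) = false.
Proof. by apply/eqP. Qed.

Lemma fusIS_bit p q h : fusIS (ISbit p) (ISbit q) h = (h == ISbit (p (+) q)).
Proof. by case: p; case: q. Qed.

Lemma AIS_bit h0 p q s h :
  AIS h0 (ISbit p) (ISbit q) (ISbit s) h =
  (h == ISbit (q (+) s)) && (h0 == ISbit (p (+) (q (+) s))).
Proof. by rewrite /AIS fusIS_bit; case: eqP => // ->; rewrite fusIS_bit. Qed.

Lemma BIS_bit h h' h0 p q h3 :
  BIS h h' h0 (ISbit p) (ISbit q) h3 = if p && q then -1 else 1.
Proof. by case: p; case: q; rewrite /BIS /= ?eqxx ?Ihalf_neq0. Qed.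

Lemma wIS_bit b : wIS (ISbit b) = if b then 1 / 2%:R else 0.
Proof. by case: b. Qed.

Section Codewords.
Variables l r : nat.
Implicit Types x y z : cw l r.

Lemma encE x i : enc 0 x i = ISbit (x 0 i != 0).
Proof. by rewrite ffunE mxE eqxx. Qed.

Lemma encD x y i : enc 0 (x + y) i = ISbit ((x 0 i != 0) (+) (y 0 i != 0)).
Proof. by rewrite encE mxE F2_addr_neq0. Qed.

Lemma enc_inj : injective (enc 0 : cw l r -> Lam l r).
Proof.
move=> x y /ffunP E; apply/rowP => i; apply: F2_inj_neq0.
by move: (E i); rewrite !encE; case: (x 0 i != 0); case: (y 0 i != 0).
Qed.

Lemma enc0_eq_enc x d c : enc 0 x = enc d c -> d = 0.
Proof.
move=> /ffunP E; apply/rowP => i; rewrite mxE; apply/eqP; apply: contraT => di.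
by move: (E i); rewrite encE ffunE di; case: (_ != 0).
Qed.

Lemma lam0_enc : lam0 l r = enc 0 0.
Proof. by apply/ffunP => i; rewrite encE mxE eqxx ffunE. Qed.

Lemma cw_addxx x : x + x = 0.
Proof. by apply/rowP => i; rewrite !mxE addrr_pchar2 // pchar_Fp. Qed.

Lemma fusLam_enc x y : fusLam (enc 0 x) (enc 0 y) (enc 0 (x + y)).
Proof. by apply/forallP => i; rewrite encD !encE fusIS_bit eqxx. Qed.

Lemma ALam_enc la0 la x1 x2 x3 :
  ALam la0 (enc 0 x1) (enc 0 x2) (enc 0 x3) la =
  (la == enc 0 (x2 + x3)) && (la0 == enc 0 (x1 + (x2 + x3))).
Proof.
apply/forallP/andP => [A | [/eqP-> /eqP->] i]; last first.
  by rewrite !encE !mxE !F2_addr_neq0 AIS_bit !eqxx.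
by split; apply/eqP/ffunP => i; have := A i;
  rewrite !encE !mxE !F2_addr_neq0 AIS_bit => /andP[/eqP E /eqP E0]; rewrite ?E ?E0.
Qed.

Lemma BLam_enc x1 x2 (la la' la0 la3 : Lam l r) :
  BLam la la' la0 (enc 0 x1) (enc 0 x2) la3 = (-1) ^ cwt (cwmul x1 x2).
Proof.
rewrite /BLam.
under eq_bigr do rewrite !encE BIS_bit.
under [X in _ * X]eq_bigr do rewrite !encE BIS_bit conjC_if_sign.
rewrite !prodr_const_if /cwt sign_subz; congr (_ ^+ _ * _ ^+ _); apply: eq_card => i;
  by rewrite !inE mxE mulf_eq0 negb_or.
Qed.

Lemma sLam_enc x : sLam (enc 0 x) = (cwt x)%:~R / 2%:R.
Proof.
rewrite /sLam.
under eq_bigr do rewrite encE wIS_bit.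
under [X in _ - X]eq_bigr do rewrite encE wIS_bit.
by rewrite !sumr_const_if /cwt rmorphB /= -!pmulrn; field.
Qed.

Lemma sLam_enc_int x : (2 %| cwt x)%Z -> sLam (enc 0 x) \is a Num.int.
Proof. by move=> /Qint_dvdz; rewrite sLam_enc. Qed.

End Codewords.

Section TwistedGroupAlgebra.
Variables (l r : nat) (C : {set cw l r}).
Implicit Types (x : cw l r) (la : Lam l r) (v : TGA C).

Definition tga_e x : TGA C := [ffun a : Csub C => if val a == x then 1 else 0].

Lemma tga_oneE : tga_one C = tga_e 0.
Proof. by []. Qed.

(* [tga_pi la] is [linfun (tga_proj la)]; restating its body lets [lfunE] compute it. *)
Definition tga_proj la v : TGA C :=
  [ffun a : Csub C => if enc 0 (val a) == la then v a else 0].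

Lemma tga_proj_is_linear la : linear (tga_proj la).
Proof.
move=> k v w; apply/ffunP => a; rewrite !ffunE.
by case: ifP => _; rewrite ?scaler0 ?addr0.
Qed.

HB.instance Definition _ la :=
  GRing.isLinear.Build Cx (TGA C) (TGA C) _ (tga_proj la) (tga_proj_is_linear la).

Lemma tga_piE la v a : tga_pi C la v a = if enc 0 (val a) == la then v a else 0.
Proof. by rewrite (lfunE (tga_proj la)) ffunE. Qed.

Lemma tga_piZ la (k : Cx) v : tga_pi C la (k *: v) = k *: tga_pi C la v.
Proof. exact: linearZZ. Qed.

Lemma tga_pi_enc (b : Csub C) v : tga_pi C (enc 0 (val b)) v = v b *: tga_e (val b).
Proof.
apply/ffunP => a; rewrite tga_piE !ffunE.
have [/enc_inj/val_inj-> | ne] := eqVneq; first by rewrite eqxx; exact: esym (mulr1 _).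
have /negbTE-> : val a != val b by apply: contraNneq ne => ->.
by rewrite scaler0.
Qed.

Lemma tga_pi_idem la v : tga_pi C la (tga_pi C la v) = tga_pi C la v.
Proof. by apply/ffunP => a; rewrite !tga_piE; case: (_ == la). Qed.

Lemma tga_pi_orth la mu v : la != mu -> tga_pi C la (tga_pi C mu v) = 0.
Proof.
move=> ne; apply/ffunP => a; rewrite !tga_piE ffunE.
by case: eqP => // ->; rewrite (negbTE ne).
Qed.

Lemma tga_pi_sum v : \sum_la tga_pi C la v = v.
Proof.
apply/ffunP => a; rewrite sum_ffunE (bigD1 (enc 0 (val a))) //= tga_piE eqxx.
by rewrite big1 ?addr0 // => la ne; rewrite tga_piE eq_sym (negbTE ne).
Qed.

Lemma mem_Scomp la v : (v \in Scomp (tga_pi C) la) = (tga_pi C la v == v).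
Proof.
apply/idP/eqP => [/memv_imgP [w _ ->] | <-]; first exact: tga_pi_idem.
exact: memv_img (memvf v).
Qed.

Lemma tga_pi_e_enc x : tga_pi C (enc 0 x) (tga_e x) = tga_e x.
Proof.
apply/ffunP => a; rewrite tga_piE ffunE.
by have [-> | _] := eqVneq (val a) x; rewrite ?eqxx ?if_same.
Qed.

Lemma tga_e_Scomp x : tga_e x \in Scomp (tga_pi C) (enc 0 x).
Proof. by rewrite mem_Scomp tga_pi_e_enc. Qed.

Lemma tga_e_neq0 x : x \in C -> tga_e x != 0.
Proof.
move=> Cx; apply/eqP => /ffunP /(_ (exist _ x Cx)).
by rewrite !ffunE eqxx => /eqP; rewrite oner_eq0.
Qed.

Lemma Scomp_neq0_label la :
  Scomp (tga_pi C) la != 0%VS -> exists b : Csub C, enc 0 (val b) = la.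
Proof.
have [b /eqP | none] := pickP (fun b : Csub C => enc 0 (val b) == la); first by exists b.
suff -> : Scomp (tga_pi C) la = 0%VS by rewrite eqxx.
apply/vspaceP => v; rewrite mem_Scomp memv0.
suff -> : tga_pi C la v = 0 by rewrite eq_sym.
by apply/ffunP => a; rewrite tga_piE ffunE none.
Qed.

Lemma Scomp_enc_neq0 x : x \in C -> Scomp (tga_pi C) (enc 0 x) != 0%VS.
Proof.
move=> Cx; apply: contra_neq (tga_e_neq0 Cx) => S0.
by have := tga_e_Scomp x; rewrite S0 memv0 => /eqP.
Qed.

Lemma Csub_val_neq x (Cx : x \in C) (a : Csub C) : a != exist _ x Cx -> val a != x.
Proof. by apply: contraNneq => ax; apply/eqP/val_inj. Qed.

Lemma Scomp_homogeneous la v : v \in Scomp (tga_pi C) la ->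
  exists k x, v = k *: tga_e x /\ (k != 0 -> x \in C /\ enc 0 x = la).
Proof.
rewrite mem_Scomp => /eqP <-.
have [b /eqP <- | none] := pickP (fun b : Csub C => enc 0 (val b) == la).
  by exists (v b), (val b); rewrite tga_pi_enc (valP b).
exists 0, 0; rewrite eqxx scale0r; split => //.
by apply/ffunP => a; rewrite tga_piE ffunE none.
Qed.

Lemma tga_codeC : codeC (tga_pi C) = C.
Proof.
apply/setP => x; rewrite inE; apply/idP/idP => [/Scomp_neq0_label[b /enc_inj <-] | ].
  exact: valP.
exact: Scomp_enc_neq0.
Qed.

Hypothesis C0 : 0 \in C.

Lemma tga_codeD : codeD (tga_pi C) = [set 0].
Proof.
apply/setP => d; rewrite !inE; apply/existsP/eqP => [[c /andP[_]] | ->].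
  by case/Scomp_neq0_label => b /enc0_eq_enc.
by exists 0; rewrite Scomp_enc_neq0 // andbT; apply/eqP/rowP => i; rewrite !mxE mulr0.
Qed.

Section Product.
Variable eps : cw l r -> cw l r -> Cx.
Hypothesis C_even : forall a, a \in C -> (2 %| cwt a)%Z.
Hypothesis CD : forall a b, a \in C -> b \in C -> a + b \in C.
Hypothesis eps_sign : forall a b, a \in C -> b \in C -> eps a b = 1 \/ eps a b = -1.
Hypothesis epsDl : forall a b c, a \in C -> b \in C -> c \in C ->
  eps (a + b) c = eps a c * eps b c.
Hypothesis epsDr : forall a b c, a \in C -> b \in C -> c \in C ->
  eps a (b + c) = eps a b * eps a c.
Hypothesis eps_comm : forall a b, a \in C -> b \in C ->
  eps a b * eps b a = (-1) ^ cwt (cwmul a b).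
Implicit Types (y : cw l r) (u w : TGA C).

Local Notation mul := (tga_mul eps).
Local Notation e := tga_e.

Lemma tga_mulDl k u v w : mul (k *: u + v) w = k *: mul u w + mul v w.
Proof.
apply/ffunP => g; rewrite !ffunE scaler_sumr -big_split; apply: eq_bigr => a _.
rewrite scaler_sumr -big_split; apply: eq_bigr => b _.
by rewrite !ffunE /GRing.scale /=; ring.
Qed.

Lemma tga_mulDr k u v w : mul u (k *: v + w) = k *: mul u v + mul u w.
Proof.
apply/ffunP => g; rewrite !ffunE scaler_sumr -big_split; apply: eq_bigr => a _.
rewrite scaler_sumr -big_split; apply: eq_bigr => b _.
by rewrite !ffunE /GRing.scale /=; ring.
Qed.

Lemma tga_mul0l v : mul 0 v = 0.
Proof.
apply/ffunP => g; rewrite !ffunE big1 // => a _.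
by rewrite big1 // => b _; rewrite ffunE mulr0 mul0r.
Qed.

Lemma tga_mul0r u : mul u 0 = 0.
Proof.
apply/ffunP => g; rewrite !ffunE big1 // => a _.
by rewrite big1 // => b _; rewrite ffunE mulr0.
Qed.

Lemma tga_mulZl k u v : mul (k *: u) v = k *: mul u v.
Proof. by rewrite -[k *: u]addr0 tga_mulDl tga_mul0l addr0. Qed.

Lemma tga_mulZr k u v : mul u (k *: v) = k *: mul u v.
Proof. by rewrite -[k *: v]addr0 tga_mulDr tga_mul0r addr0. Qed.

Lemma tga_mul_e x y : x \in C -> y \in C -> mul (e x) (e y) = eps x y *: e (x + y).
Proof.
move=> Cx Cy; apply/ffunP => g; rewrite !ffunE.
rewrite (bigD1 (exist _ x Cx : Csub C)) //= [X in _ + X]big1 ?addr0; last first.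
  move=> a /Csub_val_neq/negbTE nxa; apply: big1 => b _.
  by rewrite !ffunE nxa mulr0 mul0r.
rewrite big_mkcond (bigD1 (exist _ y Cy : Csub C)) //= [X in _ + X]big1 ?addr0; last first.
  by move=> b /Csub_val_neq/negbTE nyb; rewrite !ffunE nyb mulr0; case: ifP.
rewrite !ffunE /= !eqxx eq_sym.
by case: ifP => _; rewrite /GRing.scale /= ?mulr1 ?mulr0.
Qed.

Lemma eps_neq0 x y : x \in C -> y \in C -> eps x y != 0.
Proof. by move=> Cx Cy; case: (eps_sign Cx Cy) => ->; rewrite ?oppr_eq0 oner_eq0. Qed.

Lemma eps_sqr x y : x \in C -> y \in C -> eps x y * eps x y = 1.
Proof. by move=> Cx Cy; case: (eps_sign Cx Cy) => ->; rewrite ?mulrNN mulr1. Qed.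

Lemma eps0l y : y \in C -> eps 0 y = 1.
Proof.
move=> Cy; apply: (mulfI (eps_neq0 C0 Cy)).
by rewrite mulr1 -epsDl // addr0.
Qed.

Lemma eps0r x : x \in C -> eps x 0 = 1.
Proof.
move=> Cx; apply: (mulfI (eps_neq0 Cx C0)).
by rewrite mulr1 -epsDr // addr0.
Qed.

Lemma eps_swap x y : x \in C -> y \in C -> eps y x = (-1) ^ cwt (cwmul x y) * eps x y.
Proof. by move=> Cx Cy; rewrite -eps_comm // mulrAC eps_sqr ?mul1r. Qed.

Lemma tga_mul1l v : mul (tga_one C) v = v.
Proof.
apply/ffunP => g; rewrite ffunE (bigD1 (exist _ 0 C0 : Csub C)) //=.
rewrite [X in _ + X]big1 ?addr0 => [|a /Csub_val_neq/negbTE na0]; last first.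
  by apply: big1 => b _; rewrite ffunE na0 mulr0 mul0r.
rewrite (eq_bigl (pred1 g)) => [|b]; last by rewrite /= add0r.
by rewrite big_pred1_eq ffunE eqxx mulr1 eps0l ?mul1r // (valP g).
Qed.

Lemma tga_mul1r u : mul u (tga_one C) = u.
Proof.
apply/ffunP => g; rewrite ffunE (bigD1 g) //= [X in _ + X]big1 ?addr0; last first.
  move=> a ag; apply: big1 => b /eqP abg; rewrite ffunE.
  case: eqP => [b0|]; last by rewrite mulr0.
  by case/eqP: ag; apply/val_inj; rewrite /= -abg b0 addr0.
rewrite (eq_bigl (pred1 (exist _ 0 C0 : Csub C))) => [|b]; last first.
  by rewrite /= -{2}[val g]addr0 (inj_eq (addrI _)).
by rewrite big_pred1_eq ffunE eqxx mulr1 eps0r ?mul1r // (valP g).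
Qed.

Lemma tga_Scomp_nonint la : ~~ (sLam la \is a Num.int) -> Scomp (tga_pi C) la = 0%VS.
Proof.
move=> nint; apply/eqP; apply: contraNT nint => /Scomp_neq0_label[b <-].
exact/sLam_enc_int/C_even/valP.
Qed.

Lemma tga_Scomp_lam0 : Scomp (tga_pi C) (lam0 l r) = <[tga_one C]>%VS.
Proof.
rewrite lam0_enc tga_oneE; apply/eqP; rewrite eqEsubv -memvE tga_e_Scomp andbT.
apply/subvP => v /Scomp_homogeneous[k [x [-> Hx]]].
have [-> | /Hx[_ /enc_inj->]] := eqVneq k 0; first by rewrite scale0r mem0v.
exact/memvZ/memv_line.
Qed.

Lemma tga_mul_Scomp la1 la2 u v :
  u \in Scomp (tga_pi C) la1 -> v \in Scomp (tga_pi C) la2 ->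
  mul u v \in (\sum_(la | fusLam la1 la2 la) Scomp (tga_pi C) la)%VS.
Proof.
move=> /Scomp_homogeneous[k [x [-> Hx]]] /Scomp_homogeneous[k' [y [-> Hy]]].
rewrite tga_mulZl tga_mulZr scalerA.
have [-> | ] := eqVneq (k * k') 0; first by rewrite scale0r mem0v.
rewrite mulf_eq0 negb_or => /andP[/Hx[Cx <-] /Hy[Cy <-]].
rewrite tga_mul_e //; apply/memvZ/memvZ; rewrite memvE.
by apply: (sumv_sup (enc 0 (x + y))); [exact: fusLam_enc | rewrite -memvE tga_e_Scomp].
Qed.

Lemma tga_pi_mul_pi_mulZ la0 la k1 k2 k3 u v w :
  tga_pi C la0 (mul (k1 *: u) (tga_pi C la (mul (k2 *: v) (k3 *: w)))) =
  (k1 * k2 * k3) *: tga_pi C la0 (mul u (tga_pi C la (mul v w))).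
Proof.
by rewrite !(tga_mulZl, tga_mulZr, tga_piZ) !scalerA mulrAC.
Qed.

Lemma tga_pi_mul_pi_mul_e x y z : x \in C -> y \in C -> z \in C ->
  tga_pi C (enc 0 (x + (y + z))) (mul (e x) (tga_pi C (enc 0 (y + z)) (mul (e y) (e z)))) =
  (eps y z * eps x (y + z)) *: e (x + (y + z)).
Proof.
move=> Cx Cy Cz.
rewrite tga_mul_e // tga_piZ tga_pi_e_enc tga_mulZr tga_mul_e ?CD //.
by rewrite !tga_piZ tga_pi_e_enc scalerA.
Qed.

Lemma tga_braiding_e la0 la' x1 x2 x3 : x1 \in C -> x2 \in C -> x3 \in C ->
  ALam la0 (enc 0 x2) (enc 0 x1) (enc 0 x3) la' ->
  tga_pi C la0 (mul (e x2) (tga_pi C la' (mul (e x1) (e x3)))) =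
  \sum_(la | ALam la0 (enc 0 x1) (enc 0 x2) (enc 0 x3) la)
     BLam la la' la0 (enc 0 x1) (enc 0 x2) (enc 0 x3) *:
       tga_pi C la0 (mul (e x1) (tga_pi C la (mul (e x2) (e x3)))).
Proof.
move=> C1 C2 C3; rewrite ALam_enc => /andP[/eqP-> /eqP->].
rewrite tga_pi_mul_pi_mul_e // [x2 + (x1 + x3)]addrCA.
under eq_bigl do rewrite ALam_enc eqxx andbT.
rewrite big_pred1_eq BLam_enc tga_pi_mul_pi_mul_e // scalerA; congr (_ *: _).
(* The sign is generalized first: [ring] chokes on the exponent [cwt (cwmul x1 x2)]. *)
by rewrite !epsDr // (eps_swap C1 C2); move: ((-1) ^ _) => s; ring.
Qed.

Lemma tga_braiding la0 la1 la2 la3 la' a1 a2 a3 :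
  a1 \in Scomp (tga_pi C) la1 -> a2 \in Scomp (tga_pi C) la2 -> a3 \in Scomp (tga_pi C) la3 ->
  ALam la0 la2 la1 la3 la' ->
  tga_pi C la0 (mul a2 (tga_pi C la' (mul a1 a3))) =
  \sum_(la | ALam la0 la1 la2 la3 la)
     BLam la la' la0 la1 la2 la3 *: tga_pi C la0 (mul a1 (tga_pi C la (mul a2 a3))).
Proof.
move=> /Scomp_homogeneous[k1 [x1 [-> H1]]] /Scomp_homogeneous[k2 [x2 [-> H2]]].
move=> /Scomp_homogeneous[k3 [x3 [-> H3]]] A.
rewrite [LHS]tga_pi_mul_pi_mulZ (mulrC k2 k1).
under eq_bigr do rewrite tga_pi_mul_pi_mulZ scalerA mulrC -scalerA.
rewrite -scaler_sumr; have [-> | ] := eqVneq (k1 * k2 * k3) 0; first by rewrite !scale0r.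
rewrite !mulf_eq0 !negb_or => /andP[/andP[/H1[C1 E1] /H2[C2 E2]] /H3[C3 E3]].
by congr (_ *: _); rewrite -E1 -E2 -E3 in A *; apply: tga_braiding_e.
Qed.

Lemma tga_simple : is_simple mul (tga_pi C).
Proof.
move=> M [piM mulM]; have [-> | M0] := eqVneq M 0%VS; [by left | right].
set v := vpick M; have vM : v \in M := memv_pick M.
have [b vb] : exists b, v b != 0.
  apply/existsP; apply: contraNT M0 => /existsPn v0; rewrite -vpick0 -/v.
  by apply/eqP/ffunP => b; rewrite ffunE; apply/eqP; exact: negbNE (v0 b).
have eb : e (val b) \in M.
  have := memvZ (v b)^-1 (subvP (piM _) _ (memv_img (tga_pi C (enc 0 (val b))) vM)).
  by rewrite tga_pi_enc scalerA mulVf // scale1r.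
have e0 : e 0 \in M.
  have := memvZ (eps (val b) (val b))^-1 (mulM (e (val b)) _ eb).
  by rewrite tga_mul_e ?(valP b) // cw_addxx scalerA mulVf ?scale1r // eps_neq0 ?(valP b).
apply/eqP; rewrite eqEsubv subvf; apply/subvP => f _.
by rewrite -(tga_mul1r f) tga_oneE; exact: mulM.
Qed.

Lemma tga_framed : is_framed_algebra mul (tga_one C) (tga_pi C).
Proof.
have one_neq0 : tga_one C != 0 by rewrite tga_oneE tga_e_neq0.
exact: conj tga_mulDl (conj tga_mulDr (conj tga_pi_idem (conj tga_pi_orth
  (conj tga_pi_sum (conj tga_Scomp_nonint
  (conj (And4 one_neq0 tga_Scomp_lam0 tga_mul1l tga_mul1r)
  (conj tga_mul_Scomp tga_braiding))))))).
Qed.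

End Product.
End TwistedGroupAlgebra.

Theorem mainTheorem10 (l r : nat) (C : {set cw l r}) (eps : cw l r -> cw l r -> Cx) :
  (* C is an even code *)
  0 \in C ->
  (forall a b, a \in C -> b \in C -> a + b \in C) ->
  (forall a, a \in C -> (2 %| cwt a)%Z) ->
  (* eps : C x C -> {+1,-1} bimultiplicative *)
  (forall a b, a \in C -> b \in C -> eps a b = 1 \/ eps a b = -1) ->
  (forall a b c, a \in C -> b \in C -> c \in C -> eps (a + b) c = eps a c * eps b c) ->
  (forall a b c, a \in C -> b \in C -> c \in C -> eps a (b + c) = eps a b * eps a c) ->
  (forall a, a \in C -> eps a a = (-1) ^ (cwt a %/ 2)%Z) ->
  (forall a b, a \in C -> b \in C -> eps a b * eps b a = (-1) ^ cwt (cwmul a b)) ->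
  [/\ is_framed_algebra (tga_mul eps) (tga_one C) (@tga_pi l r C),
      is_simple (tga_mul eps) (@tga_pi l r C),
      codeD (@tga_pi l r C) = [set 0] &
      codeC (@tga_pi l r C) = C].
Proof.
move=> C0 CD C_even eps_sign epsDl epsDr _ eps_comm.
split; [exact: tga_framed | exact: tga_simple | exact: tga_codeD | exact: tga_codeC].
Qed.
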